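(* Fix a state $s$. Let $\pi^t_s\in\Delta(\mathscr{A})\cap\operatorname{rint}\operatorname{dom}h$, let $\widehat Q^t_s,\widehat Q^{t-1}_s\in\mathbb{R}^{\mathscr{A}}$ be arbitrary vectors and $\eta^{t-1},\eta^t>0$. Let $$\tilde\pi_s=\arg\min_{\pi_s\in\Delta(\mathscr{A})}-\langle\widehat Q^t_s-\widehat Q^{t-1}_s,\pi_s\rangle+\tfrac1{\eta^{t-1}}D_h(\pi_s,\pi^t_s),$$ and define the Lazy PMD(+correction) objective $F_{\mathrm{lzc}}(\pi_s)=-\langle\widehat Q^t_s,\pi_s\rangle+\frac1{\eta^t}D_h(\pi_s,\tilde\pi_s)$ and the Lazy PMD(+momentum) objective $F_{\mathrm{mom}}(\pi_s)=-\langle\widehat Q^t_s+\frac{\eta^{t-1}}{\eta^t}(\widehat Q^t_s-\widehat Q^{t-1}_s),\pi_s\rangle+\frac1{\eta^t}D_h(\pi_s,\pi^t_s)$. Then for every $\pi_s\in\Delta(\mathscr{A})\cap\operatorname{dom}h$, $$F_{\mathrm{lzc}}(\pi_s)-F_{\mathrm{lzc}}(\tilde\pi_s)\ \le\ F_{\mathrm{mom}}(\pi_s)-F_{\mathrm{mom}}(\tilde\pi_s).$$ (This is the sense in which the solutions of Lazy PMD(+momentum) subsume those of Lazy PMD(+correction).)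
   Context: $\mathscr{A}$ is a finite action set and $\langle\cdot,\cdot\rangle$ the dot product on $\mathbb{R}^{\mathscr{A}}$. The mirror map $h:\mathbb{R}^{\mathscr{A}}\to\mathbb{R}\cup\{+\infty\}$ is of Legendre type (strictly convex and essentially smooth on $\operatorname{rint}\operatorname{dom}h$) with $\Delta(\mathscr{A})\cap\operatorname{rint}\operatorname{dom}h\neq\emptyset$; its Bregman divergence is $D_h(x,y)=h(x)-h(y)-\langle\nabla h(y),x-y\rangle$ for $x\in\operatorname{dom}h$, $y\in\operatorname{rint}\operatorname{dom}h$. For $q\in\mathbb{R}^{\mathscr{A}}$, $y\in\Delta(\mathscr{A})\cap\operatorname{rint}\operatorname{dom}h$ and $\eta>0$, the problem $\arg\min_{\pi\in\Delta(\mathscr{A})}-\langle q,\pi\rangle+\frac1\eta D_h(\pi,y)$ has a unique minimizer, lying in $\operatorname{rint}\operatorname{dom}h$. *)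

From mathcomp Require Import all_boot all_order all_algebra all_classical all_reals all_analysis.
Import numFieldNormedType.Exports.
Import Order.TTheory GRing.Theory Num.Theory.
Set Implicit Arguments. Unset Strict Implicit. Unset Printing Implicit Defensive.
Local Open Scope classical_set_scope.
Local Open Scope ring_scope.

(* The finite action set is 'I_n; R^A is represented by row vectors 'rV[R]_n
   (which carry MathComp-Analysis' normed-space structure). *)
Section Defs.
Variables (R : realType) (n : nat).
Implicit Types (u v x y : 'rV[R]_n) (h : 'rV[R]_n -> \bar R).

Definition dot u v : R := \sum_(i < n) u 0 i * v 0 i.

Definition simplex : set 'rV[R]_n :=
  [set p | (forall i, 0 <= p 0 i) /\ \sum_(i < n) p 0 i = 1].

Definition dom h : set 'rV[R]_n := [set x | (h x < +oo)%E].

(* interior of the domain (for an essentially smooth h, rint dom h = int dom h) *)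
Definition intdom h : set 'rV[R]_n := interior (dom h).

Definition grad h y : 'rV[R]_n :=
  \row_j ('d (fun x => fine (h x)) y : 'rV[R]_n -> R) (delta_mx 0 j).

(* Bregman divergence D_h(x, y) = h x - h y - <grad h y, x - y>,
   for x in dom h and y in int dom h (where h x, h y are finite) *)
Definition Dh h x y : R := fine (h x) - fine (h y) - dot (grad h y) (x - y).

(* Legendre type (Rockafellar, Sec. 26): closed proper convex, strictly convex
   and essentially smooth on the interior of its domain. *)
Definition proper_fun h : Prop :=
  (forall x, h x != -oo%E) /\ (exists x, dom h x).

Definition convex_ext h : Prop :=
  forall x y (l : R), 0 < l < 1 ->
    (h (l *: x + (1 - l) *: y)%R <= l%:E * h x + (1 - l)%R%:E * h y)%E.

Definition lsc_ext h : Prop :=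
  forall x (a : R), (a%:E < h x)%E -> \forall y \near x, (a%:E < h y)%E.

Definition strictly_convex_on h (D : set 'rV[R]_n) : Prop :=
  forall x y (l : R), D x -> D y -> x != y -> 0 < l < 1 ->
    (h (l *: x + (1 - l) *: y)%R < l%:E * h x + (1 - l)%R%:E * h y)%E.

Definition essentially_smooth h : Prop :=
  [/\ intdom h !=set0,
      (forall y, intdom h y -> differentiable (fun x => fine (h x)) y) &
      (forall x, closure (intdom h) x -> ~ intdom h x ->
         (fun y => `|grad h y|) @ within (intdom h) (nbhs x) --> +oo)].

Definition legendre h : Prop :=
  [/\ proper_fun h, convex_ext h, lsc_ext h,
      strictly_convex_on h (intdom h) & essentially_smooth h].

Definition md_obj h (q : 'rV[R]_n) (eta : R) y (p : 'rV[R]_n) : R :=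
  - dot q p + eta^-1 * Dh h p y.

(* p is the (unique, by the standing assumptions) minimizer of md_obj over
   Delta(A) (the objective is +oo off dom h) *)
Definition is_md_argmin h (q : 'rV[R]_n) (eta : R) y (p : 'rV[R]_n) : Prop :=
  [/\ simplex p, dom h p &
      forall p', simplex p' -> dom h p' -> md_obj h q eta y p <= md_obj h q eta y p'].

End Defs.

(** The correction step's minimiser [ptil] is interior, so first-order
    optimality along the feasible segments from [ptil] to [p] gives
    [eta1 <Qt - Qt1, p - ptil> + <grad h pit, p - ptil> <= <grad h ptil, p - ptil>].
    The two objective gaps share the term [-<Qt, p - ptil> + (h p - h ptil) / eta],
    so the momentum gap exceeds the correction gap by
    [(<grad h ptil, p - ptil> - eta1 <Qt - Qt1, p - ptil> - <grad h pit, p - ptil>) / eta],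
    which is nonnegative by the first-order condition. *)
From mathcomp Require Import all_boot all_order all_algebra all_classical all_reals all_analysis.
From mathcomp Require Import ring lra.
Import numFieldNormedType.Exports.
Import Order.TTheory GRing.Theory Num.Theory.
Local Open Scope classical_set_scope.
Local Open Scope ring_scope.
Set Implicit Arguments. Unset Strict Implicit.

Lemma le_diff_of_right_quotients (R : realFieldType) (V : normedModType R)
    (f : V -> R) (x v : V) (c : R) :
  differentiable f x ->
  (\forall t \near 0^'+, c * t <= f (t *: v + x) - f x) ->
  c <= 'd f x v.
Proof.
move=> df lb; rewrite -deriveE //.
have /cvg_ex [l fl] := diff_derivable (v := v) df.
rewrite /derive (cvg_lim _ fl) //.
apply: (cvgr_to_ge (cvg_dnbhs_at_right fl)).
near=> t.
have t_gt0 : 0 < t by near: t; exact: nbhs_right_gt.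
by rewrite /= ler_pdivlMl // mulrC; near: t.
Unshelve. all: end_near.
Qed.

Lemma near0_line (R : realFieldType) (V : normedModType R) (P : set V) (x v : V) :
  (\forall y \near x, P y) -> \forall t \near 0, P (t *: v + x).
Proof.
have line_cvg : (fun t : R => t *: v + x) @ 0 --> x.
  rewrite -[x in _ --> x]add0r -(scale0r v).
  by apply: cvgD; [apply: cvgZ; [exact: cvg_id | exact: cvg_cst] | exact: cvg_cst].
exact: line_cvg.
Qed.

Section MirrorDescentStep.
Variables (R : realType) (n : nat).
Implicit Types (u v x y z : 'rV[R]_n) (h : 'rV[R]_n -> \bar R).

Lemma dotBr u x y : dot u (x - y) = dot u x - dot u y.
Proof. by rewrite /dot -sumrB; apply: eq_bigr => i _; rewrite !mxE mulrBr. Qed.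

Lemma dotZr a u x : dot u (a *: x) = a * dot u x.
Proof. by rewrite /dot mulr_sumr; apply: eq_bigr => i _; rewrite mxE mulrCA. Qed.

Lemma dotDl u x y : dot (x + y) u = dot x u + dot y u.
Proof. by rewrite /dot -big_split; apply: eq_bigr => i _; rewrite mxE mulrDl. Qed.

Lemma dotZl a u x : dot (a *: x) u = a * dot x u.
Proof. by rewrite /dot mulr_sumr; apply: eq_bigr => i _; rewrite mxE mulrA. Qed.

Lemma diff_fine_grad h y v : 'd (fun x => fine (h x)) y v = dot (grad h y) v.
Proof.
rewrite [in LHS](row_sum_delta v) linear_sum.
by apply: eq_bigr => i _; rewrite linearZ /= mxE mulrC.
Qed.

Lemma md_objB h q eta y x z :
  md_obj h q eta y x - md_obj h q eta y z =
  - dot q (x - z) + eta^-1 * (fine (h x) - fine (h z) - dot (grad h y) (x - z)).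
Proof. by rewrite /md_obj /Dh !dotBr; ring. Qed.

Lemma simplex_segment x y t :
  simplex x -> simplex y -> 0 <= t <= 1 -> simplex (t *: (y - x) + x).
Proof.
move=> [x_ge0 x_sum1] [y_ge0 y_sum1] /andP[t_ge0 t_le1]; split.
  by move=> i; rewrite !mxE; have := x_ge0 i; have := y_ge0 i; nra.
under eq_bigr => i _ do rewrite !mxE.
by rewrite big_split /= -mulr_sumr sumrB x_sum1 y_sum1 subrr mulr0 add0r.
Qed.

Lemma md_argmin_first_order h q eta y x p :
  0 < eta -> is_md_argmin h q eta y x -> intdom h x ->
  differentiable (fun z => fine (h z)) x -> simplex p ->
  eta * dot q (p - x) + dot (grad h y) (p - x) <= dot (grad h x) (p - x).
Proof.
move=> eta_gt0 [x_simplex _ x_min] x_int dfx p_simplex.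
rewrite -[X in _ <= X](diff_fine_grad h x (p - x)).
apply: le_diff_of_right_quotients; first exact: dfx.
have dom_near : \forall t \near 0, dom h (t *: (p - x) + x).
  by apply: near0_line; exact: x_int.
near=> t.
have t_gt0 : 0 < t by near: t; exact: nbhs_right_gt.
have t_lt1 : t < 1 by near: t; exact: nbhs_right_lt.
have t_dom : dom h (t *: (p - x) + x).
  by near: t; apply: (cvg_within (F := nbhs (0 : R))); exact: dom_near.
have t_01 : 0 <= t <= 1 by rewrite !ltW.
have := x_min _ (simplex_segment x_simplex p_simplex t_01) t_dom.
rewrite -subr_ge0 md_objB addrK !dotZr => gap.
have := mulr_ge0 (ltW eta_gt0) gap.
by rewrite mulrDr mulrA mulfV ?gt_eqF // mul1r; lra.
Unshelve. all: end_near.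
Qed.

Lemma md_obj_momentum_gap h q d eta eta1 y ytil p :
  md_obj h (q + (eta1 / eta) *: d) eta y p - md_obj h (q + (eta1 / eta) *: d) eta y ytil
  - (md_obj h q eta ytil p - md_obj h q eta ytil ytil) =
  eta^-1 * (dot (grad h ytil) (p - ytil)
            - (eta1 * dot d (p - ytil) + dot (grad h y) (p - ytil))).
Proof.
(* Abstracting the gradients keeps rewriting from unfolding [grad] when it
   tries to unify [grad h y] with [grad h ytil]. *)
rewrite /md_obj /Dh; move: (grad h y) (grad h ytil) => g gtil.
by rewrite !dotBr !dotDl !dotZl; ring.
Qed.

End MirrorDescentStep.

Theorem proposition4 (R : realType) (n : nat) (h : 'rV[R]_n -> \bar R)
  (h_leg : legendre h)
  (h_dom : exists p, simplex p /\ intdom h p)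
  (pit Qt Qt1 : 'rV[R]_n) (eta1 eta : R)
  (pit_simplex : simplex pit) (pit_int : intdom h pit)
  (eta1_gt0 : 0 < eta1) (eta_gt0 : 0 < eta)
  (ptil : 'rV[R]_n)
  (ptil_min : is_md_argmin h (Qt - Qt1) eta1 pit ptil)
  (ptil_int : intdom h ptil) :
  let F_lzc := md_obj h Qt eta ptil in
  let F_mom := md_obj h (Qt + (eta1 / eta) *: (Qt - Qt1)) eta pit in
  forall p, simplex p -> dom h p ->
    F_lzc p - F_lzc ptil <= F_mom p - F_mom ptil.
Proof.
move=> F_lzc F_mom p p_simplex _.
have [_ _ _ _ [_ h_diff _]] := h_leg.
have first_order := md_argmin_first_order eta1_gt0 ptil_min ptil_int
  (h_diff _ ptil_int) p_simplex.
rewrite -subr_ge0 /F_lzc /F_mom md_obj_momentum_gap.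
by apply: mulr_ge0; [rewrite invr_ge0 ltW | rewrite subr_ge0 first_order].
Qed.
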